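(* For $n>0$ define $f_n:\mathbb R\to\mathbb R$ by $f_n(x)=\left(1+\frac{x}{\sqrt n}\right)^n e^{-\sqrt n\,x}\,\mathbf 1_{[-\sqrt n,\infty)}(x)$. Then: (1) if $x\ge0$ and $l>n>0$, then $f_l(x)\le f_n(x)\le(2/\sqrt e)^n e^{-\sqrt n\,x/2}$; (2) if $x\le0$ and $l>n>0$, then $f_n(x)\le f_l(x)\le e^{-x^2/2}$; (3) $f_n(x)\to e^{-x^2/2}$ pointwise as $n\to\infty$. *)

From Stdlib Require Import Reals Lra Lia.
Open Scope R_scope.

Definition fn (n : nat) (x : R) : R :=
  if Rle_dec (- sqrt (INR n)) x
  then (1 + x / sqrt (INR n)) ^ n * exp (- sqrt (INR n) * x)
  else 0.

From Stdlib Require Import Reals Lra Lia.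
From Coquelicot Require Import Coquelicot.
Open Scope R_scope.

(* Write s = sqrt n.  Where f_n(x) > 0, f_n(x) = exp F(s, x) with
   F(s, x) = s^2 ln(1 + x/s) - s x, and dF/ds = s psi(x/s) where
   psi(y) = 2 ln(1 + y) - y/(1 + y) - y.  As psi(0) = 0 and
   psi'(y) = -y^2/(1 + y)^2, F decreases in s for x >= 0 and increases for
   x <= 0: this is the monotonicity in n.  Moreover
   F(s, x) = s^2 g(x/s) - x^2/2 with g(y) = ln(1 + y) - y + y^2/2, and g has
   the sign of y with |g(y)| <= |y|^3 for y >= -1/2; this gives the Gaussian
   bound for x <= 0 and |F(s, x) + x^2/2| <= |x|^3/s -> 0.  The bound for
   x >= 0 is the tangent inequality ln(1 + y) <= ln 2 + (y - 1)/2. *)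

Lemma nondecreasing_of_derive_nonneg (f df : R -> R) (a b : R) : a <= b ->
  (forall t, a <= t <= b -> is_derive f t (df t)) ->
  (forall t, a <= t <= b -> 0 <= df t) -> f a <= f b.
Proof.
intros hab hd hdf.
destruct (MVT_gen f a b df) as [c [hc hmvt]];
  rewrite ?Rmin_left, ?Rmax_right in * by lra.
- intros t ht; apply hd; lra.
- intros t ht; apply continuity_pt_filterlim, (ex_derive_continuous (V := R_NormedModule)).
  exists (df t); apply hd; lra.
- assert (0 <= df c * (b - a)) by (apply Rmult_le_pos; [apply hdf|]; lra).
  lra.
Qed.

Lemma nonincreasing_of_derive_nonpos (f df : R -> R) (a b : R) : a <= b ->
  (forall t, a <= t <= b -> is_derive f t (df t)) ->
  (forall t, a <= t <= b -> df t <= 0) -> f b <= f a.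
Proof.
intros hab hd hdf.
enough (- f a <= - f b) by lra.
apply (nondecreasing_of_derive_nonneg (fun t => - f t) (fun t => - df t)); auto.
- intros t ht; apply (is_derive_opp (V := R_NormedModule)); auto.
- intros t ht; specialize (hdf t ht); lra.
Qed.

Lemma exp_le_exp x y : x <= y -> exp x <= exp y.
Proof. intros [hxy | <-]; [left; apply exp_increasing |]; lra. Qed.

Lemma sqrt_exp x : sqrt (exp x) = exp (x / 2).
Proof.
rewrite <- sqrt_square by (left; apply exp_pos).
now rewrite <- exp_plus, Rplus_half_diag.
Qed.

Lemma pow_exp_ln a n : 0 < a -> a ^ n = exp (INR n * ln a).
Proof. intros ha; rewrite <- Rpower_pow by easy; reflexivity. Qed.

Definition ln1p_rem (y : R) : R := ln (1 + y) - y + y ^ 2 / 2.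

Lemma is_derive_ln1p_rem y : -1 < y -> is_derive ln1p_rem y (y ^ 2 / (1 + y)).
Proof. intros hy; unfold ln1p_rem; auto_derive; [lra | field; lra]. Qed.

Lemma ln1p_rem0 : ln1p_rem 0 = 0.
Proof. unfold ln1p_rem; rewrite Rplus_0_r, ln_1; field. Qed.

Lemma ln1p_rem_sign y : -1 < y ->
  (0 <= y -> 0 <= ln1p_rem y) /\ (y <= 0 -> ln1p_rem y <= 0).
Proof.
intros hy.
assert (hmono : forall a b, -1 < a <= b -> ln1p_rem a <= ln1p_rem b).
{ intros a b hab.
  apply (nondecreasing_of_derive_nonneg _ (fun t => t ^ 2 / (1 + t))); try lra;
    intros t ht; [apply is_derive_ln1p_rem | apply Rdiv_le_0_compat]; nra. }
split; intros hy0; [pose proof (hmono 0 y) | pose proof (hmono y 0)];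
  rewrite ln1p_rem0 in *; lra.
Qed.

(* [ln1p_rem y - y ^ 3] is nonincreasing on [(-2/3, oo)] and vanishes at 0. *)
Lemma Rabs_ln1p_rem_le y : -1/2 <= y -> Rabs (ln1p_rem y) <= Rabs y ^ 3.
Proof.
intros hy.
assert (hanti : forall a b, -2/3 < a <= b ->
          ln1p_rem b - b ^ 3 <= ln1p_rem a - a ^ 3).
{ intros a b hab.
  apply (nonincreasing_of_derive_nonpos (fun t => ln1p_rem t - t ^ 3)
           (fun t => t ^ 2 / (1 + t) - 3 * t ^ 2)); try lra; intros t ht.
  - apply (is_derive_minus (V := R_NormedModule));
      [apply is_derive_ln1p_rem; lra | auto_derive; [easy | ring]].
  - replace (t ^ 2 / (1 + t) - 3 * t ^ 2) with (- (t ^ 2 * (2 + 3 * t) / (1 + t)))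
      by (field; lra).
    enough (0 <= t ^ 2 * (2 + 3 * t) / (1 + t)) by lra.
    apply Rdiv_le_0_compat; [apply Rmult_le_pos|]; nra. }
destruct (ln1p_rem_sign y ltac:(lra)) as [hpos hneg].
destruct (Rle_lt_dec 0 y) as [hy0 | hy0].
- pose proof (hanti 0 y ltac:(lra)); specialize (hpos hy0).
  rewrite ln1p_rem0, !Rabs_pos_eq in * by lra; lra.
- pose proof (hanti y 0 ltac:(lra)); specialize (hneg (Rlt_le _ _ hy0)).
  rewrite ln1p_rem0, Rabs_left1, Rabs_left in * by lra; lra.
Qed.

Definition psi (y : R) : R := 2 * ln (1 + y) - y / (1 + y) - y.

Lemma psi_sign y : -1 < y -> (0 <= y -> psi y <= 0) /\ (y <= 0 -> 0 <= psi y).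
Proof.
intros hy.
assert (hanti : forall a b, -1 < a <= b -> psi b <= psi a).
{ intros a b hab.
  apply (nonincreasing_of_derive_nonpos _ (fun t => - (t ^ 2 / (1 + t) ^ 2)));
    try lra; intros t ht.
  - unfold psi; auto_derive; [lra | field; lra].
  - enough (0 <= t ^ 2 / (1 + t) ^ 2) by lra.
    apply Rdiv_le_0_compat; [nra | apply pow_lt; lra]. }
assert (psi0 : psi 0 = 0) by (unfold psi; rewrite Rplus_0_r, ln_1; field).
split; intros hy0; [pose proof (hanti 0 y) | pose proof (hanti y 0)]; lra.
Qed.

Definition fn_log (s x : R) : R := s * s * ln (1 + x / s) - s * x.

Lemma is_derive_fn_log s x : 0 < s -> 0 < s + x ->
  is_derive (fun s => fn_log s x) s (s * psi (x / s)).
Proof.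
intros hs hsx.
assert (0 < 1 + x / s)
  by (replace (1 + x / s) with ((s + x) / s) by (field; lra);
      apply Rdiv_lt_0_compat; lra).
unfold fn_log, psi; auto_derive; [repeat split; lra |].
unfold Rdiv in *; set (L := ln (1 + x * / s)); field; lra.
Qed.

Lemma fn_log_ln1p_rem s x : 0 < s -> fn_log s x = s * s * ln1p_rem (x / s) - x ^ 2 / 2.
Proof.
intros hs; unfold fn_log, ln1p_rem; unfold Rdiv.
set (L := ln (1 + x * / s)); field; lra.
Qed.

Lemma fn_log_antitone x s t : 0 <= x -> 0 < s <= t -> fn_log t x <= fn_log s x.
Proof.
intros hx hst.
apply (nonincreasing_of_derive_nonpos (fun r => fn_log r x) (fun r => r * psi (x / r)));
  try lra; intros r hr; [apply is_derive_fn_log; lra |].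
assert (0 <= x / r) by (apply Rdiv_le_0_compat; lra).
assert (psi (x / r) <= 0) by (apply psi_sign; lra).
nra.
Qed.

Lemma fn_log_monotone x s t : x <= 0 -> - x < s <= t -> fn_log s x <= fn_log t x.
Proof.
intros hx hst.
apply (nondecreasing_of_derive_nonneg (fun r => fn_log r x) (fun r => r * psi (x / r)));
  try lra; intros r hr; [apply is_derive_fn_log; lra |].
assert (-1 < x / r <= 0)
  by (split; [apply Rlt_div_r | apply Rle_div_l]; lra).
assert (0 <= psi (x / r)) by (apply psi_sign; lra).
nra.
Qed.

Lemma ln_1p_le_tangent y : -1 < y -> ln (1 + y) <= ln (2 / sqrt (exp 1)) + y / 2.
Proof.
intros hy.
assert (he : 0 < 2 / sqrt (exp 1))
  by (apply Rdiv_lt_0_compat; [lra | apply sqrt_lt_R0, exp_pos]).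
rewrite <- (ln_exp (y / 2)), <- ln_mult by (easy || apply exp_pos).
apply ln_le; [lra |].
replace (2 / sqrt (exp 1) * exp (y / 2)) with (2 * exp ((y - 1) / 2)).
- pose proof (exp_ineq1_le ((y - 1) / 2)); lra.
- replace ((y - 1) / 2) with (y / 2 + - (1 / 2)) by field.
  rewrite sqrt_exp, exp_plus, exp_Ropp.
  field; apply Rgt_not_eq, exp_pos.
Qed.

Lemma fn_log_le_exp_bound s x : 0 < s -> 0 <= x ->
  fn_log s x <= s * s * ln (2 / sqrt (exp 1)) - s * x / 2.
Proof.
intros hs hx.
assert (hy : 0 <= x / s) by (apply Rdiv_le_0_compat; lra).
assert (hln : s * s * ln (1 + x / s) <= s * s * (ln (2 / sqrt (exp 1)) + x / s / 2))
  by (apply Rmult_le_compat_l, ln_1p_le_tangent; nra).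
replace (s * s * (ln (2 / sqrt (exp 1)) + x / s / 2))
  with (s * s * ln (2 / sqrt (exp 1)) + s * x / 2) in hln by (field; lra).
unfold fn_log; lra.
Qed.

Lemma Rabs_fn_log_add_sq_le s x : 0 < s -> 2 * Rabs x <= s ->
  Rabs (fn_log s x + x ^ 2 / 2) <= Rabs x ^ 3 / s.
Proof.
intros hs hxs.
assert (hq : Rabs (x / s) = Rabs x / s)
  by (rewrite Rabs_div, (Rabs_pos_eq s) by lra; reflexivity).
assert (hx : -1/2 <= x / s).
{ pose proof (Rle_abs (- (x / s))) as hle; rewrite Rabs_Ropp, hq in hle.
  enough (Rabs x / s <= 1/2) by lra.
  apply Rle_div_l; lra. }
rewrite fn_log_ln1p_rem by lra.
replace (s * s * ln1p_rem (x / s) - x ^ 2 / 2 + x ^ 2 / 2) with (s * s * ln1p_rem (x / s))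
  by ring.
rewrite Rabs_mult, (Rabs_pos_eq (s * s)) by nra.
replace (Rabs x ^ 3 / s) with (s * s * (Rabs x / s) ^ 3) by (field; lra).
apply Rmult_le_compat_l; [nra |].
rewrite <- hq; apply Rabs_ln1p_rem_le; lra.
Qed.

Lemma is_lim_seq_sqrt_INR : is_lim_seq (fun n => sqrt (INR n)) p_infty.
Proof.
apply (filterlim_comp _ _ _ INR sqrt _ (Rbar_locally p_infty)); [apply is_lim_seq_INR |].
exact (is_lim_sqrt_p (fun x => x) p_infty (is_lim_id p_infty)).
Qed.

Lemma is_lim_seq_fn_log x :
  is_lim_seq (fun n => fn_log (sqrt (INR n)) x) (- x ^ 2 / 2).
Proof.
apply is_lim_seq_spec; intros eps.
destruct (proj2 (is_lim_seq_spec _ _) is_lim_seq_sqrt_INR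
            (Rmax (2 * Rabs x) (Rabs x ^ 3 / eps))) as [N hN].
exists N; intros n hn; specialize (hN n hn).
set (s := sqrt (INR n)) in *.
assert (hs2 := Rmax_l (2 * Rabs x) (Rabs x ^ 3 / eps)).
assert (hs3 := Rmax_r (2 * Rabs x) (Rabs x ^ 3 / eps)).
assert (hs : 0 < s) by (pose proof (Rabs_pos x); lra).
replace (fn_log s x - - x ^ 2 / 2) with (fn_log s x + x ^ 2 / 2) by lra.
eapply Rle_lt_trans; [apply Rabs_fn_log_add_sq_le; lra |].
apply Rlt_div_l; [lra |].
rewrite Rmult_comm; apply Rlt_div_l; [apply cond_pos | lra].
Qed.

Lemma sqrt_INR_pos n : (0 < n)%nat -> 0 < sqrt (INR n).
Proof. intros hn; apply sqrt_lt_R0, lt_0_INR, hn. Qed.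

Lemma fn_exp_fn_log n x : (0 < n)%nat -> - sqrt (INR n) < x ->
  fn n x = exp (fn_log (sqrt (INR n)) x).
Proof.
intros hn hx; unfold fn; destruct (Rle_dec _ _) as [_ | hx']; [| lra].
pose proof (sqrt_INR_pos n hn) as hs.
set (s := sqrt (INR n)) in *.
assert (hy : 0 < 1 + x / s)
  by (replace (1 + x / s) with ((s + x) / s) by (field; lra);
      apply Rdiv_lt_0_compat; lra).
assert (hn2 : INR n = s * s) by (symmetry; apply sqrt_sqrt, pos_INR).
rewrite pow_exp_ln, <- exp_plus, hn2 by easy.
unfold fn_log; f_equal; ring.
Qed.

Lemma fn_eq0 n x : (0 < n)%nat -> x <= - sqrt (INR n) -> fn n x = 0.
Proof.
intros hn hx; unfold fn; destruct (Rle_dec _ _) as [hx' | _]; [| easy].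
replace x with (- sqrt (INR n)) by lra.
pose proof (sqrt_INR_pos n hn).
replace (1 + - sqrt (INR n) / sqrt (INR n)) with 0 by (field; lra).
rewrite pow_i by easy; ring.
Qed.

Lemma fn_ge0 n x : (0 < n)%nat -> 0 <= fn n x.
Proof.
intros hn; destruct (Rle_lt_dec x (- sqrt (INR n))).
- rewrite fn_eq0; easy || lra.
- rewrite fn_exp_fn_log by easy; left; apply exp_pos.
Qed.

Lemma fn_antitone_pos n l x : 0 <= x -> (0 < n < l)%nat -> fn l x <= fn n x.
Proof.
intros hx hnl.
assert (hs : 0 < sqrt (INR n)) by (apply sqrt_INR_pos; lia).
assert (hsl : sqrt (INR n) <= sqrt (INR l)) by (apply sqrt_le_1_alt, le_INR; lia).
rewrite !fn_exp_fn_log by (lia || lra).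
apply exp_le_exp, fn_log_antitone; lra.
Qed.

Lemma fn_le_exp_bound n x : 0 <= x -> (0 < n)%nat ->
  fn n x <= (2 / sqrt (exp 1)) ^ n * exp (- sqrt (INR n) * x / 2).
Proof.
intros hx hn.
pose proof (sqrt_INR_pos n hn) as hs.
assert (he : 0 < 2 / sqrt (exp 1))
  by (apply Rdiv_lt_0_compat; [lra | apply sqrt_lt_R0, exp_pos]).
rewrite fn_exp_fn_log, pow_exp_ln, <- exp_plus by (easy || lra).
apply exp_le_exp.
assert (hn2 : INR n = sqrt (INR n) * sqrt (INR n)) by (symmetry; apply sqrt_sqrt, pos_INR).
set (s := sqrt (INR n)) in *.
rewrite hn2; pose proof (fn_log_le_exp_bound s x hs hx); lra.
Qed.

Lemma fn_monotone_neg n l x : x <= 0 -> (0 < n < l)%nat -> fn n x <= fn l x.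
Proof.
intros hx hnl.
assert (hs : 0 < sqrt (INR n)) by (apply sqrt_INR_pos; lia).
assert (hsl : sqrt (INR n) < sqrt (INR l))
  by (apply sqrt_lt_1_alt; split; [apply pos_INR | apply lt_INR; lia]).
destruct (Rle_lt_dec x (- sqrt (INR n))).
- rewrite (fn_eq0 n) by (easy || lia); apply fn_ge0; lia.
- rewrite !fn_exp_fn_log by (lia || lra).
  apply exp_le_exp, fn_log_monotone; lra.
Qed.

Lemma fn_le_gauss_neg n x : x <= 0 -> (0 < n)%nat -> fn n x <= exp (- x ^ 2 / 2).
Proof.
intros hx hn.
pose proof (sqrt_INR_pos n hn) as hs.
destruct (Rle_lt_dec x (- sqrt (INR n))).
- rewrite fn_eq0 by easy; left; apply exp_pos.
- rewrite fn_exp_fn_log, fn_log_ln1p_rem by easy.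
  apply exp_le_exp.
  assert (ln1p_rem (x / sqrt (INR n)) <= 0).
  { apply ln1p_rem_sign; [apply Rlt_div_r | apply Rle_div_l]; lra. }
  nra.
Qed.

Lemma fn_cvg_gauss x : Un_cv (fun n => fn n x) (exp (- x ^ 2 / 2)).
Proof.
apply is_lim_seq_Reals.
apply is_lim_seq_ext_loc with (fun n => exp (fn_log (sqrt (INR n)) x)).
- destruct (proj2 (is_lim_seq_spec _ _) is_lim_seq_sqrt_INR (Rabs x)) as [N hN].
  exists N; intros n hn; specialize (hN n hn).
  assert (hn0 : (0 < n)%nat).
  { destruct n; [rewrite INR_0, sqrt_0 in hN; pose proof (Rabs_pos x); lra | lia]. }
  pose proof (Rle_abs (- x)); rewrite Rabs_Ropp in *.
  symmetry; apply fn_exp_fn_log; [easy | lra].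
- apply is_lim_seq_continuous; [apply derivable_continuous_pt, derivable_pt_exp |].
  apply is_lim_seq_fn_log.
Qed.

Theorem lemma3p7 :
  (forall (n l : nat) (x : R), 0 <= x -> (0 < n < l)%nat ->
     fn l x <= fn n x /\
     fn n x <= (2 / sqrt (exp 1)) ^ n * exp (- sqrt (INR n) * x / 2)) /\
  (forall (n l : nat) (x : R), x <= 0 -> (0 < n < l)%nat ->
     fn n x <= fn l x /\ fn l x <= exp (- x ^ 2 / 2)) /\
  (forall x : R, Un_cv (fun n => fn n x) (exp (- x ^ 2 / 2))).
Proof.
split; [| split].
- intros n l x hx hnl; split; [apply fn_antitone_pos | apply fn_le_exp_bound]; easy || lia.
- intros n l x hx hnl; split; [apply fn_monotone_neg | apply fn_le_gauss_neg]; easy || lia.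
- exact fn_cvg_gauss.
Qed.
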